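(* Let $\alpha_1>0$ and $\alpha_1+\alpha_2+1>0$, and suppose the loss scales as $\ell(N,D)\sim N^{-\alpha_N}+D^{-\alpha_D}$ with $\alpha_N=\alpha_1+\alpha_2+1$ and $\alpha_D=\frac{\alpha_1+\alpha_2+1}{\alpha_1+1}$. Under a fixed compute budget $C=ND\cdot\min\{N,D\}$, the unique compute-optimal allocation (minimizing $\ell$ subject to the budget) lies in the underparameterized regime $N<D$, and the optimal allocation and resulting loss scale as $$N^*(C)\sim C^{\alpha_D/(\alpha_N+2\alpha_D)}=C^{1/(\alpha_1+3)},\qquad D^*(C)\sim C^{1-2\alpha_D/(\alpha_N+2\alpha_D)}=C^{(\alpha_1+1)/(\alpha_1+3)},$$ $$\ell^*(C)\sim C^{-\alpha_C},\qquad \alpha_C:=\frac{\alpha_N\alpha_D}{\alpha_N+2\alpha_D}=\frac{\alpha_1+\alpha_2+1}{\alpha_1+3}>0.$$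
   Context: $N$ is the number of model parameters and $D$ the number of training samples; ''$\sim$'' denotes asymptotic scaling up to constants as $C\to\infty$. *)

From Stdlib Require Import Reals.
Open Scope R_scope.

(* Loss model  l(N,D) = A N^{-aN} + B D^{-aD}  (A, B > 0 are the constants hidden in "~"). *)
Definition loss (aN aD A B N D : R) : R :=
  A * Rpower N (- aN) + B * Rpower D (- aD).

Definition compute (N D : R) : R := N * D * Rmin N D.

Definition is_optimal (aN aD A B C N D : R) : Prop :=
  0 < N /\ 0 < D /\ compute N D = C /\
  forall N' D', 0 < N' -> 0 < D' -> compute N' D' = C ->
    loss aN aD A B N D <= loss aN aD A B N' D'.

Definition asymp (f g : R -> R) : Prop :=
  exists c1 c2 C0, 0 < c1 /\ 0 < c2 /\
    forall C, C0 <= C -> c1 * g C <= f C /\ f C <= c2 * g C.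

Definition alphaN (a1 a2 : R) : R := a1 + a2 + 1.
Definition alphaD (a1 a2 : R) : R := (a1 + a2 + 1) / (a1 + 1).
Definition alphaC (a1 a2 : R) : R :=
  alphaN a1 a2 * alphaD a1 a2 / (alphaN a1 a2 + 2 * alphaD a1 a2).

(* On the branch N <= D the budget forces D = C / N^2, so in the variable
   x = ln N the loss is A e^(-aN x) + B C^(-aD) e^(2 aD x): a strictly convex
   function whose unique critical point is x* = x0 + aD/(aN + 2 aD) ln C.  This
   gives N* and D* as constant multiples of powers of C, and the optimal loss
   L0 C^(-alpha_C) exactly.  On the branch N > D one has D^3 < C, so the loss
   exceeds B C^(-aD/3); since alpha_C > aD/3 iff aD < aN iff alpha_1 > 0, this
   beats the critical value for large C.  The same inequality aD < aN gives
   N* < D* for large C. *)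

From Stdlib Require Import Reals Lra Psatz.
Open Scope R_scope.

(* Each exponential lies strictly above its tangent line; at a critical point
   the first-order terms of the two tangents cancel. *)
Lemma exp_sum_lt_of_critical (p q a b m n : R) :
  0 < p -> 0 < q -> 0 < a -> 0 < b ->
  p * a * exp (- p * m) = q * b * exp (q * m) -> n <> m ->
  a * exp (- p * m) + b * exp (q * m) < a * exp (- p * n) + b * exp (q * n).
Proof.
  intros hp hq ha hb hcrit hnm.
  set (t := n - m).
  assert (ht : t <> 0) by (unfold t; lra).
  assert (En : exp (- p * n) = exp (- p * m) * exp (- p * t))
    by (rewrite <- exp_plus; f_equal; unfold t; ring).
  assert (Eq : exp (q * n) = exp (q * m) * exp (q * t))
    by (rewrite <- exp_plus; f_equal; unfold t; ring).
  rewrite En, Eq.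
  pose proof (exp_pos (- p * m)); pose proof (exp_pos (q * m)).
  set (u := a * exp (- p * m)) in *; set (v := b * exp (q * m)) in *.
  assert (hu : 0 < u) by (unfold u; nra).
  assert (hv : 0 < v) by (unfold v; nra).
  assert (huv : p * u = q * v) by (unfold u, v; rewrite <- !Rmult_assoc; exact hcrit).
  assert (Tp := exp_ineq1 (- p * t) ltac:(intro; apply ht; nra)).
  assert (Tq := exp_ineq1 (q * t) ltac:(intro; apply ht; nra)).
  replace (a * (exp (- p * m) * exp (- p * t))) with (u * exp (- p * t))
    by (unfold u; ring).
  replace (b * (exp (q * m) * exp (q * t))) with (v * exp (q * t))
    by (unfold v; ring).
  nra.
Qed.

Lemma eventually_lt_mul_ln (k K : R) :
  0 < k -> exists C0, 0 < C0 /\ forall C, C0 <= C -> K < k * ln C.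
Proof.
  intros hk.
  exists (exp (K / k + 1)); split; [apply exp_pos|].
  intros C hC.
  assert (hC0 : 0 < C) by (pose proof (exp_pos (K / k + 1)); lra).
  assert (hlnC : K / k + 1 <= ln C).
  { destruct (Rle_or_lt (K / k + 1) (ln C)) as [h|h]; [exact h|].
    apply exp_increasing in h; rewrite exp_ln in h; lra. }
  replace K with (k * (K / k)) by (field; lra).
  nra.
Qed.

Lemma asymp_of_const_mul (f g : R -> R) (k : R) :
  0 < k -> (forall C, f C = k * g C) -> asymp f g.
Proof.
  intros hk hf; exists k, k, 0; split; [exact hk|]; split; [exact hk|].
  intros C _; rewrite hf; lra.
Qed.

Lemma optimal_of_strict_min (aN aD A B C N0 D0 : R) :
  0 < N0 -> 0 < D0 -> compute N0 D0 = C ->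
  (forall N D, 0 < N -> 0 < D -> compute N D = C -> ~ (N = N0 /\ D = D0) ->
     loss aN aD A B N0 D0 < loss aN aD A B N D) ->
  is_optimal aN aD A B C N0 D0 /\
  (forall N D, is_optimal aN aD A B C N D -> N = N0 /\ D = D0).
Proof.
  intros hN0 hD0 hC0 hmin; split.
  - split; [exact hN0|]; split; [exact hD0|]; split; [exact hC0|].
    intros N D hN hD hC.
    destruct (Req_dec N N0) as [eN | hne]; destruct (Req_dec D D0) as [eD | hne'];
      [subst; apply Rle_refl | ..]; apply Rlt_le, hmin; tauto.
  - intros N D (hN & hD & hC & hopt).
    destruct (Req_dec N N0) as [eN | hne]; destruct (Req_dec D D0) as [eD | hne'];
      [split; assumption | ..];
      pose proof (hopt N0 D0 hN0 hD0 hC0);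
      assert (loss aN aD A B N0 D0 < loss aN aD A B N D) by (apply hmin; tauto); lra.
Qed.

Section UnderparameterizedOptimum.

Variables s d A B : R.
Hypotheses (hs : 0 < s) (hd : 0 < d) (hds : d < s) (hA : 0 < A) (hB : 0 < B).

Definition log_N0 : R := (ln (s * A) - ln (2 * d * B)) / (s + 2 * d).
Definition log_Nopt (c : R) : R := log_N0 + d / (s + 2 * d) * c.
Definition Nopt (C : R) : R := exp (log_Nopt (ln C)).
Definition Dopt (C : R) : R := exp (ln C - 2 * log_Nopt (ln C)).
Definition loss0 : R := A * exp (- s * log_N0) + B * exp (2 * d * log_N0).

Lemma loss_budget_curve (c x : R) :
  loss s d A B (exp x) (exp (c - 2 * x))
  = A * exp (- s * x) + B * exp (- d * c) * exp (2 * d * x).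
Proof.
  unfold loss, Rpower; rewrite !ln_exp, Rmult_assoc, <- exp_plus.
  do 3 f_equal; ring.
Qed.

Lemma log_Nopt_critical (c : R) :
  s * A * exp (- s * log_Nopt c)
  = 2 * d * (B * exp (- d * c)) * exp (2 * d * log_Nopt c).
Proof.
  replace (2 * d * (B * exp (- d * c))) with (2 * d * B * exp (- d * c)) by ring.
  rewrite <- (exp_ln (s * A)), <- (exp_ln (2 * d * B)) by nra.
  rewrite <- !exp_plus; f_equal.
  unfold log_Nopt, log_N0; field; lra.
Qed.

Lemma compute_opt (C : R) :
  0 < C -> Nopt C <= Dopt C -> compute (Nopt C) (Dopt C) = C.
Proof.
  intros hC hle; unfold compute; rewrite Rmin_left by exact hle.
  unfold Nopt, Dopt; rewrite <- !exp_plus.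
  transitivity (exp (ln C)); [f_equal; ring | exact (exp_ln C hC)].
Qed.

Lemma loss_opt (C : R) :
  loss s d A B (Nopt C) (Dopt C) = loss0 * Rpower C (- (s * d / (s + 2 * d))).
Proof.
  unfold Nopt, Dopt; rewrite loss_budget_curve.
  unfold loss0, Rpower, log_Nopt.
  rewrite Rmult_plus_distr_r, !Rmult_assoc, <- !exp_plus.
  f_equal; f_equal; f_equal; field; lra.
Qed.

Lemma Nopt_eq (C : R) : Nopt C = exp log_N0 * Rpower C (d / (s + 2 * d)).
Proof. unfold Nopt, log_Nopt, Rpower; rewrite <- exp_plus; reflexivity. Qed.

Lemma Dopt_eq (C : R) :
  Dopt C = exp (- 2 * log_N0) * Rpower C (1 - 2 * d / (s + 2 * d)).
Proof.
  unfold Dopt, log_Nopt, Rpower; rewrite <- exp_plus.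
  f_equal; field; lra.
Qed.

Lemma loss0_pos : 0 < loss0.
Proof.
  unfold loss0; pose proof (exp_pos (- s * log_N0)); pose proof (exp_pos (2 * d * log_N0)).
  nra.
Qed.

Lemma loss_opt_lt_underparameterized (C N D : R) :
  0 < N -> N <= D -> compute N D = C -> ~ (N = Nopt C /\ D = Dopt C) ->
  loss s d A B (Nopt C) (Dopt C) < loss s d A B N D.
Proof.
  intros hN hND hC hne.
  assert (hD : 0 < D) by lra.
  unfold compute in hC; rewrite Rmin_left in hC by exact hND.
  assert (lnD : ln D = ln C - 2 * ln N)
    by (rewrite <- hC, !ln_mult by nra; ring).
  rewrite <- (exp_ln N) by exact hN; rewrite <- (exp_ln D) by exact hD.
  unfold Nopt, Dopt; rewrite lnD, !loss_budget_curve.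
  apply exp_sum_lt_of_critical; try nra.
  - pose proof (exp_pos (- d * ln C)); nra.
  - apply log_Nopt_critical.
  - intro E; apply hne; unfold Nopt, Dopt.
    rewrite <- E, <- lnD, !exp_ln by assumption; split; reflexivity.
Qed.

Lemma loss_gt_overparameterized (C N D : R) :
  0 < D -> D < N -> compute N D = C ->
  B * Rpower C (- (d / 3)) < loss s d A B N D.
Proof.
  intros hD hDN hC.
  unfold compute in hC; rewrite Rmin_right in hC by lra.
  assert (lnC : ln C = ln N + 2 * ln D)
    by (rewrite <- hC, !ln_mult by nra; ring).
  assert (lnDN : ln D < ln N) by (apply ln_increasing; assumption).
  unfold loss, Rpower.
  assert (hexp : exp (- (d / 3) * ln C) < exp (- d * ln D))
    by (apply exp_increasing; rewrite lnC; nra).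
  pose proof (exp_pos (- s * ln N)); nra.
Qed.

(* The two growth conditions are linear in ln C with slopes (s - d)/(s + 2d)
   and 2d(s - d)/(3(s + 2d)), both positive because d < s. *)
Lemma opt_underparameterized_eventually :
  exists C0, 0 < C0 /\ forall C, C0 <= C ->
    Nopt C < Dopt C /\
    loss0 * Rpower C (- (s * d / (s + 2 * d))) < B * Rpower C (- (d / 3)).
Proof.
  set (e := s + 2 * d).
  assert (he : 0 < e) by (unfold e; lra).
  destruct (eventually_lt_mul_ln ((s - d) / e) (3 * log_N0))
    as (C1 & hC1 & H1); [apply Rdiv_lt_0_compat; lra|].
  destruct (eventually_lt_mul_ln (2 * d * (s - d) / (3 * e)) (ln loss0 - ln B))
    as (C2 & hC2 & H2); [apply Rdiv_lt_0_compat; nra|].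
  exists (Rmax C1 C2); split; [apply (Rlt_le_trans _ C1); [lra | apply Rmax_l]|].
  intros C hC.
  specialize (H1 C (Rle_trans _ _ _ (Rmax_l C1 C2) hC)).
  specialize (H2 C (Rle_trans _ _ _ (Rmax_r C1 C2) hC)).
  split.
  - apply exp_increasing; unfold log_Nopt; fold e.
    replace ((s - d) / e * ln C) with (ln C - 3 * (d / e * ln C)) in H1
      by (unfold e; field; lra).
    lra.
  - unfold Rpower; rewrite <- (exp_ln loss0) by exact loss0_pos; rewrite <- (exp_ln B) by exact hB.
    rewrite <- !exp_plus; apply exp_increasing.
    replace (2 * d * (s - d) / (3 * e) * ln C)
      with (s * d / e * ln C - d / 3 * ln C) in H2 by (unfold e; field; lra).
    fold e; lra.
Qed.

Theorem Nopt_Dopt_unique_optimal :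
  exists C0, forall C, C0 <= C ->
    is_optimal s d A B C (Nopt C) (Dopt C) /\
    (forall N D, is_optimal s d A B C N D -> N = Nopt C /\ D = Dopt C) /\
    Nopt C < Dopt C.
Proof.
  destruct opt_underparameterized_eventually as (C0 & hC0 & Hev).
  exists C0; intros C hC.
  destruct (Hev C hC) as [hlt hover].
  assert (hstrict : forall N D, 0 < N -> 0 < D -> compute N D = C ->
      ~ (N = Nopt C /\ D = Dopt C) ->
      loss s d A B (Nopt C) (Dopt C) < loss s d A B N D).
  { intros N D hN hD hcomp hne.
    destruct (Rle_or_lt N D) as [hND | hDN].
    - exact (loss_opt_lt_underparameterized C N D hN hND hcomp hne).
    - rewrite loss_opt.
      pose proof (loss_gt_overparameterized C N D hD hDN hcomp); lra. }
  destruct (optimal_of_strict_min s d A B C (Nopt C) (Dopt C)) as [hopt huniq];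
    [apply exp_pos | apply exp_pos | apply compute_opt; lra | exact hstrict |].
  split; [exact hopt | split; [exact huniq | exact hlt]].
Qed.

End UnderparameterizedOptimum.

Theorem proposition2 (a1 a2 A B : R) :
  0 < a1 -> 0 < a1 + a2 + 1 -> 0 < A -> 0 < B ->
  (* exponent identities and positivity of alpha_C *)
  alphaD a1 a2 / (alphaN a1 a2 + 2 * alphaD a1 a2) = 1 / (a1 + 3) /\
  1 - 2 * alphaD a1 a2 / (alphaN a1 a2 + 2 * alphaD a1 a2) = (a1 + 1) / (a1 + 3) /\
  alphaC a1 a2 = (a1 + a2 + 1) / (a1 + 3) /\
  0 < alphaC a1 a2 /\
  exists (Nstar Dstar : R -> R) (C0 : R),
    (forall C, C0 <= C ->
       is_optimal (alphaN a1 a2) (alphaD a1 a2) A B C (Nstar C) (Dstar C) /\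
       (forall N D, is_optimal (alphaN a1 a2) (alphaD a1 a2) A B C N D ->
          N = Nstar C /\ D = Dstar C) /\
       Nstar C < Dstar C) /\
    asymp Nstar (fun C => Rpower C (alphaD a1 a2 / (alphaN a1 a2 + 2 * alphaD a1 a2))) /\
    asymp Dstar (fun C => Rpower C (1 - 2 * alphaD a1 a2 / (alphaN a1 a2 + 2 * alphaD a1 a2))) /\
    asymp (fun C => loss (alphaN a1 a2) (alphaD a1 a2) A B (Nstar C) (Dstar C))
          (fun C => Rpower C (- alphaC a1 a2)).
Proof.
  intros h1 hs hA hB.
  assert (hd : 0 < alphaD a1 a2) by (apply Rdiv_lt_0_compat; lra).
  assert (hds : alphaD a1 a2 < alphaN a1 a2).
  { unfold alphaD, alphaN; apply Rmult_lt_reg_r with (a1 + 1); [lra|].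
    field_simplify; nra. }
  assert (hC : alphaC a1 a2 = (a1 + a2 + 1) / (a1 + 3))
    by (unfold alphaC, alphaN, alphaD; field; repeat split; apply Rgt_not_eq; nra).
  split; [unfold alphaN, alphaD; field; repeat split; apply Rgt_not_eq; nra|].
  split; [unfold alphaN, alphaD; field; repeat split; apply Rgt_not_eq; nra|].
  split; [exact hC|].
  split; [rewrite hC; apply Rdiv_lt_0_compat; lra|].
  destruct (Nopt_Dopt_unique_optimal (alphaN a1 a2) (alphaD a1 a2) A B hs hd hds hA hB)
    as [C0 HC0].
  exists (Nopt (alphaN a1 a2) (alphaD a1 a2) A B),
    (Dopt (alphaN a1 a2) (alphaD a1 a2) A B), C0.
  split; [exact HC0|]; split; [|split].
  - eapply asymp_of_const_mul; [| intro C; apply Nopt_eq]; apply exp_pos.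
  - eapply asymp_of_const_mul; [| intro C; apply Dopt_eq; assumption]; apply exp_pos.
  - eapply asymp_of_const_mul; [| intro C; apply loss_opt; assumption].
    apply loss0_pos; assumption.
Qed.
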